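(* For every $n\ge1$ and $t\in(0,1)$, the recurrence coefficients satisfy $$(\alpha+\beta+\gamma+2n+2)\alpha_n=2(t-1)r_n-2ty_n-(t-1)R_n+t\alpha+(t-1)\beta+t,$$ and \begin{align*} &(\alpha+\beta+\gamma+2n+1)(\alpha+\beta+\gamma+2n-1)\beta_n\\ &=[ty_n-(t-1)r_n]^2-(t-1)(2nt+\gamma t+\beta)r_n+t[(t-1)(2n+\gamma)-\alpha]y_n+n(n+\gamma)(t^2-t). \end{align*}
   Context: Fix $\alpha,\beta,\gamma>0$ and real constants $A,B$ with $A\ge0$, $A+B\ge0$, not both $A$ and $A+B$ equal to $0$. Let $\theta$ be the Heaviside function. For $t\in(0,1)$ put $w(x)=x^{\alpha}(1-x)^{\beta}|x-t|^{\gamma}(A+B\theta(x-t))$ on $[0,1]$. Let $P_n$ be the monic orthogonal polynomials w.r.t. $w$ on $[0,1]$, $\int_0^1P_mP_nw\,dx=h_n\delta_{mn}$, with recurrence $xP_n=P_{n+1}+\alpha_nP_n+\beta_nP_{n-1}$, $P_0=1$, $\beta_0P_{-1}=0$. Define $R_n=\frac{\beta}{h_n}\int_0^1\frac{P_n^2w}{1-y}dy$, and for $n\ge1$, $y_n=\frac{\alpha}{h_{n-1}}\int_0^1\frac{P_nP_{n-1}w}{y}dy$, $r_n=\frac{\beta}{h_{n-1}}\int_0^1\frac{P_nP_{n-1}w}{1-y}dy$. *)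

From Stdlib Require Import Reals Lra.
Open Scope R_scope.

(* x^a for real exponent a > 0, extended by 0 at x <= 0 (continuous extension). *)
Definition rpw (x a : R) : R := if Rlt_dec 0 x then Rpower x a else 0.

(* Heaviside function (value at 0 is irrelevant for all integrals below). *)
Definition heav (x : R) : R := if Rlt_dec 0 x then 1 else 0.

Definition wgt (al be ga A B t x : R) : R :=
  rpw x al * rpw (1 - x) be * rpw (Rabs (x - t)) ga * (A + B * heav (x - t)).

(* (Possibly improper) integral over (0,1):  int_0^1 f = l  means
   lim_{a->0+, b->1-} int_a^b f = l  (Riemann integrals on compact subintervals). *)
Definition int01 (f : R -> R) (l : R) : Prop :=
  forall eps, 0 < eps -> exists delta, 0 < delta /\
    forall a b, 0 < a < delta -> 0 < 1 - b < delta ->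
      exists pr : Riemann_integrable f a b, Rabs (RiemannInt pr - l) < eps.

Fixpoint lowpoly (c : nat -> R) (n : nat) (x : R) : R :=
  match n with
  | O => 0
  | S m => lowpoly c m x + c m * x ^ m
  end.

Definition monic_deg (n : nat) (p : R -> R) : Prop :=
  exists c : nat -> R, forall x, p x = x ^ n + lowpoly c n x.

Definition monic_OPS (w : R -> R) (P : nat -> R -> R) (h : nat -> R) : Prop :=
  (forall n, monic_deg n (P n)) /\
  (forall m n, m <> n -> int01 (fun x => P m x * P n x * w x) 0) /\
  (forall n, int01 (fun x => P n x * P n x * w x) (h n)).

Definition recurrence (P : nat -> R -> R) (an bn : nat -> R) : Prop :=
  (forall x, x * P O x = P 1%nat x + an O * P O x) /\
  (forall n x, (1 <= n)%nat ->
     x * P n x = P (S n) x + an n * P n x + bn n * P (pred n) x).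

From Stdlib Require Import Reals Lra Lia Classical FunctionalExtensionality.
From Coquelicot Require Import Coquelicot.
Open Scope R_scope.

(* Write w = x^al (1-x)^be W(x) with W = |x-t|^ga (A + B theta(x-t)). Integrating by
   parts against the boundary term S(x) g(x) x^al (1-x)^be (x-t) W(x), which vanishes
   at 0 and 1, turns the singular integrals int S w / x and int S w / (1-x) of a C^1
   function S into proper integrals of S and S'.  Hence Phi_0 = int . w / x,
   Phi_1 = - int . w / (1-x) and a combination Phi_t of these with S |-> int S' w all
   satisfy Phi_z((x - z) f) = int f w.  For such a functional the three-term recurrence
   and the Christoffel-Darboux identity give
     Phi(P_n P_{n-1})^2 - h_{n-1} Phi(P_n P_{n-1}) = Phi(P_n^2) Phi(P_{n-1}^2).
   The integration by parts with g = 1 also gives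
     al t Phi_0(S) - be (1-t) Phi_1(S) = int (x-t) S' w + (al+be+ga+1) int S w,
   which, applied to P_n P_{n-1}, P_n^2 and x P_n^2 and combined with the moments
   int P_n P_n' w = 0, int x P_n P_n' w = n h_n and int P_n' P_{n-1} w = n h_{n-1},
   gives the formula for alpha_n; the three quadratic relations at z = 0, 1, t then
   give the formula for beta_n. *)

(** * Real powers extended by zero *)

Lemma rpw_pos x a : 0 < x -> rpw x a = Rpower x a.
Proof. intro H; unfold rpw; destruct (Rlt_dec 0 x); [reflexivity | lra]. Qed.

Lemma rpw_npos x a : x <= 0 -> rpw x a = 0.
Proof. intro H; unfold rpw; destruct (Rlt_dec 0 x); [lra | reflexivity]. Qed.

Lemma rpw_ge0 x a : 0 <= rpw x a.
Proof. unfold rpw; destruct (Rlt_dec 0 x); [left; apply exp_pos | lra]. Qed.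

Lemma rpw_gt0 x a : 0 < x -> 0 < rpw x a.
Proof. intro H; rewrite rpw_pos by exact H; apply exp_pos. Qed.

Lemma rpw_succ x a : rpw x (a + 1) = x * rpw x a.
Proof.
  destruct (Rlt_le_dec 0 x).
  - rewrite !rpw_pos by assumption. rewrite Rpower_plus, Rpower_1 by assumption. ring.
  - rewrite !rpw_npos by assumption. ring.
Qed.

Lemma Rpower_pred x a : 0 < x -> Rpower x (a - 1) = Rpower x a / x.
Proof.
  intro Hx. replace (Rpower x a) with (Rpower x ((a - 1) + 1)) by (f_equal; ring).
  rewrite Rpower_plus, Rpower_1 by exact Hx. field. lra.
Qed.

Lemma Rpower_lt_near0 a eps : 0 < a -> 0 < eps ->
  exists d, 0 < d /\ forall x, 0 < x < d -> Rpower x a < eps.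
Proof.
  intros Ha He. exists (Rpower eps (/ a)). split; [apply exp_pos |].
  intros x Hx. replace eps with (Rpower (Rpower eps (/ a)) a).
  - apply Rlt_Rpower_l; lra.
  - rewrite Rpower_mult. replace (/ a * a) with 1 by (field; lra). apply Rpower_1, He.
Qed.

Lemma is_derive_rpw_pos a x : 0 < x -> is_derive (fun u => rpw u a) x (a * Rpower x (a - 1)).
Proof.
  intro Hx. apply is_derive_ext_loc with (fun u => Rpower u a).
  - apply locally_interval with 0 p_infty; simpl; auto.
    intros y Hy _. rewrite rpw_pos by exact Hy. reflexivity.
  - apply is_derive_Reals, derivable_pt_lim_power, Hx.
Qed.

Lemma is_derive_rpw_neg a x : x < 0 -> is_derive (fun u => rpw u a) x 0.
Proof.
  intro Hx. apply is_derive_ext_loc with (fun _ => 0).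
  - apply locally_interval with m_infty 0; simpl; auto.
    intros y _ Hy. rewrite rpw_npos by lra. reflexivity.
  - apply (is_derive_const 0).
Qed.

Lemma continuous_rpw a x : 0 < a -> continuous (fun u => rpw u a) x.
Proof.
  intro Ha. destruct (Rtotal_order x 0) as [Hx | [-> | Hx]].
  - apply (ex_derive_continuous (K := R_AbsRing) (V := R_NormedModule)). eexists. apply is_derive_rpw_neg, Hx.
  - apply continuity_pt_filterlim. intros eps Heps.
    destruct (Rpower_lt_near0 a eps Ha Heps) as [d [Hd Hsmall]].
    exists d; split; [exact Hd |]. intros y [_ Hy]. simpl in *. unfold R_dist in *.
    rewrite (rpw_npos 0), Rminus_0_r in * by lra.
    destruct (Rlt_le_dec 0 y).
    + rewrite rpw_pos, Rabs_pos_eq by (try left; try apply exp_pos; assumption).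
      apply Hsmall. rewrite Rabs_pos_eq in Hy; lra.
    + rewrite rpw_npos, Rabs_R0 by assumption. exact Heps.
  - apply (ex_derive_continuous (K := R_AbsRing) (V := R_NormedModule)). eexists. apply is_derive_rpw_pos, Hx.
Qed.

Lemma is_derive_rpw a x : 1 < a -> is_derive (fun u => rpw u a) x (a * rpw x (a - 1)).
Proof.
  intro Ha. destruct (Rtotal_order x 0) as [Hx | [-> | Hx]].
  - rewrite (rpw_npos x), Rmult_0_r by lra. apply is_derive_rpw_neg, Hx.
  - rewrite (rpw_npos 0), Rmult_0_r by lra.
    apply is_derive_Reals. intros eps Heps.
    destruct (Rpower_lt_near0 (a - 1) eps) as [d [Hd Hsmall]]; try lra.
    exists (mkposreal d Hd). intros x Hx0 Hx. simpl in Hx.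
    rewrite Rplus_0_l, (rpw_npos 0), Rminus_0_r by lra.
    destruct (Rlt_le_dec 0 x) as [Hxpos | Hxneg].
    + rewrite rpw_pos by exact Hxpos.
      match goal with |- Rabs ?e < _ => replace e with (Rpower x (a - 1)) end.
      2: { rewrite Rpower_pred by exact Hxpos. field. lra. }
      rewrite Rabs_pos_eq by (left; apply exp_pos).
      apply Hsmall. rewrite Rabs_pos_eq in Hx; lra.
    + rewrite rpw_npos by exact Hxneg.
      match goal with |- Rabs ?e < _ => replace e with 0 by (field; lra) end.
      rewrite Rabs_R0. exact Heps.
  - rewrite rpw_pos by exact Hx. apply is_derive_rpw_pos, Hx.
Qed.

(** * Improper integrals over (0,1) *)

Definition is_int01 (f : R -> R) (l : R) : Prop :=
  forall eps, 0 < eps -> exists delta, 0 < delta /\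
    forall a b, 0 < a < delta -> 0 < 1 - b < delta ->
      ex_RInt f a b /\ Rabs (RInt f a b - l) < eps.

Lemma is_int01_int01 f l : int01 f l -> is_int01 f l.
Proof.
  intros H eps He. destruct (H eps He) as [d [Hd Hab]]. exists d; split; [exact Hd |].
  intros a b Ha Hb. destruct (Hab a b Ha Hb) as [pr Hl]. split.
  - apply ex_RInt_Reals_1, pr.
  - rewrite (RInt_Reals _ _ _ pr). exact Hl.
Qed.

Lemma is_int01_unique f l1 l2 : is_int01 f l1 -> is_int01 f l2 -> l1 = l2.
Proof.
  intros H1 H2. destruct (Req_dec l1 l2) as [| Hne]; [assumption | exfalso].
  set (e := Rabs (l1 - l2) / 3).
  assert (He : 0 < e) by (apply Rdiv_lt_0_compat; [apply Rabs_pos_lt; lra | lra]).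
  destruct (H1 e He) as [d1 [Hd1 K1]], (H2 e He) as [d2 [Hd2 K2]].
  set (a := Rmin d1 d2 / 2).
  pose proof (Rmin_pos d1 d2 Hd1 Hd2). pose proof (Rmin_l d1 d2). pose proof (Rmin_r d1 d2).
  destruct (K1 a (1 - a)) as [_ L1]; try (unfold a; lra).
  destruct (K2 a (1 - a)) as [_ L2]; try (unfold a; lra).
  assert (Rabs (l1 - l2) <= Rabs (RInt f a (1 - a) - l1) + Rabs (RInt f a (1 - a) - l2)).
  { replace (l1 - l2) with (- (RInt f a (1 - a) - l1) + (RInt f a (1 - a) - l2)) by ring.
    rewrite <- (Rabs_Ropp (RInt f a (1 - a) - l1)). apply Rabs_triang. }
  unfold e in *. lra.
Qed.

Lemma is_int01_ext f g l : (forall x, 0 < x < 1 -> f x = g x) -> is_int01 f l -> is_int01 g l.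
Proof.
  intros E H eps He. destruct (H eps He) as [d [Hd K]].
  exists (Rmin d (/ 2)). split; [apply Rmin_pos; lra |].
  intros a b Ha Hb. pose proof (Rmin_l d (/ 2)). pose proof (Rmin_r d (/ 2)).
  destruct (K a b) as [Hex Hl]; try lra.
  assert (Efg : forall x, Rmin a b < x < Rmax a b -> f x = g x).
  { intros x Hx. rewrite Rmin_left, Rmax_right in Hx by lra. apply E. lra. }
  split.
  - eapply ex_RInt_ext; eassumption.
  - rewrite <- (RInt_ext f g) by exact Efg. exact Hl.
Qed.

Lemma is_int01_plus f g l m : is_int01 f l -> is_int01 g m -> is_int01 (fun x => f x + g x) (l + m).
Proof.
  intros H1 H2 eps He.
  destruct (H1 (eps / 2)) as [d1 [Hd1 K1]]; [lra |]. destruct (H2 (eps / 2)) as [d2 [Hd2 K2]]; [lra |].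
  exists (Rmin d1 d2). split; [apply Rmin_pos; assumption |].
  intros a b Ha Hb. pose proof (Rmin_l d1 d2). pose proof (Rmin_r d1 d2).
  destruct (K1 a b) as [X1 L1]; try lra. destruct (K2 a b) as [X2 L2]; try lra.
  split; [apply (ex_RInt_plus f g); assumption |].
  rewrite (RInt_plus f g) by assumption. unfold plus; simpl.
  replace (RInt f a b + RInt g a b - (l + m)) with ((RInt f a b - l) + (RInt g a b - m)) by ring.
  eapply Rle_lt_trans; [apply Rabs_triang | lra].
Qed.

Lemma is_int01_scal c f l : is_int01 f l -> is_int01 (fun x => c * f x) (c * l).
Proof.
  intros H eps He. pose proof (Rabs_pos c).
  destruct (H (eps / (Rabs c + 1))) as [d [Hd K]]; [apply Rdiv_lt_0_compat; lra |].
  exists d; split; [exact Hd |]. intros a b Ha Hb. destruct (K a b Ha Hb) as [X L].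
  split; [apply (ex_RInt_scal f a b c), X |].
  rewrite (RInt_scal f) by exact X. unfold scal; simpl; unfold mult; simpl.
  replace (c * RInt f a b - c * l) with (c * (RInt f a b - l)) by ring.
  rewrite Rabs_mult. pose proof (Rabs_pos (RInt f a b - l)).
  apply Rle_lt_trans with ((Rabs c + 1) * Rabs (RInt f a b - l)); [nra |].
  replace eps with ((Rabs c + 1) * (eps / (Rabs c + 1))) by (field; lra).
  apply Rmult_lt_compat_l; lra.
Qed.

Lemma continuous_near (F : R -> R) x0 eps : continuous F x0 -> 0 < eps ->
  exists d, 0 < d /\ forall y, Rabs (y - x0) < d -> Rabs (F y - F x0) < eps.
Proof.
  intros H He. apply continuity_pt_filterlim in H.
  destruct (H eps He) as [d [Hd K]]. exists d; split; [exact Hd |].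
  intros y Hy. destruct (Req_dec y x0) as [-> | Hne].
  - rewrite Rminus_eq_0, Rabs_R0. exact He.
  - apply (K y). split; [split; [exact I | auto] | exact Hy].
Qed.

Lemma is_int01_derive_0 (F f : R -> R) :
  (forall x, 0 < x < 1 -> is_derive F x (f x)) ->
  (forall x, 0 < x < 1 -> continuous f x) ->
  continuous F 0 -> continuous F 1 -> F 0 = 0 -> F 1 = 0 -> is_int01 f 0.
Proof.
  intros HD HC C0 C1 F0 F1 eps He.
  destruct (continuous_near F 0 (eps / 2) C0) as [d0 [Hd0 K0]]; [lra |].
  destruct (continuous_near F 1 (eps / 2) C1) as [d1 [Hd1 K1]]; [lra |].
  exists (Rmin (/ 2) (Rmin d0 d1)). split; [repeat apply Rmin_pos; lra |].
  intros a b Ha Hb. pose proof (Rmin_l (/ 2) (Rmin d0 d1)). pose proof (Rmin_r (/ 2) (Rmin d0 d1)).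
  pose proof (Rmin_l d0 d1). pose proof (Rmin_r d0 d1).
  assert (I : is_RInt f a b (minus (F b) (F a))).
  { apply (is_RInt_derive F f); rewrite Rmin_left, Rmax_right by lra; intros x Hx;
      [apply HD | apply HC]; lra. }
  split; [eexists; exact I |]. rewrite (is_RInt_unique _ _ _ _ I). unfold minus, plus, opp; simpl.
  assert (A1 : Rabs (F a - F 0) < eps / 2) by (apply K0; rewrite Rminus_0_r, Rabs_pos_eq; lra).
  assert (A2 : Rabs (F b - F 1) < eps / 2) by (apply K1; rewrite Rabs_left; lra).
  rewrite F0, Rminus_0_r in A1. rewrite F1, Rminus_0_r in A2.
  rewrite Rminus_0_r. eapply Rle_lt_trans; [apply Rabs_triang | rewrite Rabs_Ropp; lra].
Qed.

Lemma is_int01_continuous (f : R -> R) :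
  (forall x, 0 <= x <= 1 -> continuous f x) -> is_int01 f (RInt f 0 1).
Proof.
  intros HC.
  destruct (continuity_ab_maj (fun x => Rabs (f x)) 0 1) as [xm [Hm _]]; [lra | |].
  { intros c Hc. apply continuity_pt_filterlim, continuous_Rabs_comp, HC, Hc. }
  set (M := Rabs (f xm)). assert (HM : 0 <= M) by apply Rabs_pos.
  assert (EX : forall u v, 0 <= u <= v -> v <= 1 -> ex_RInt f u v).
  { intros u v Huv Hv. apply (ex_RInt_continuous (V := R_CompleteNormedModule) f).
    rewrite Rmin_left, Rmax_right by lra. intros; apply HC; lra. }
  intros eps He. set (d := Rmin (/ 2) (eps / (2 * M + 2))).
  assert (Hd : 0 < d) by (apply Rmin_pos; [lra | apply Rdiv_lt_0_compat; lra]).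
  assert (Hd2 : d <= / 2) by apply Rmin_l.
  assert (Hde : d <= eps / (2 * M + 2)) by apply Rmin_r.
  exists d. split; [exact Hd |]. intros a b Ha Hb.
  split; [apply EX; lra |].
  rewrite <- (RInt_Chasles f 0 a 1), <- (RInt_Chasles f a b 1) by (apply EX; lra).
  unfold plus; simpl.
  assert (B1 : Rabs (RInt f 0 a) <= (a - 0) * M).
  { apply abs_RInt_le_const; [lra | apply EX; lra | intros; apply Hm; lra]. }
  assert (B2 : Rabs (RInt f b 1) <= (1 - b) * M).
  { apply abs_RInt_le_const; [lra | apply EX; lra | intros; apply Hm; lra]. }
  replace (RInt f a b - (RInt f 0 a + (RInt f a b + RInt f b 1))) with (- (RInt f 0 a + RInt f b 1)) by ring.
  rewrite Rabs_Ropp. eapply Rle_lt_trans; [apply Rabs_triang |].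
  assert (Hsmall : (a + (1 - b)) * M <= eps * (2 * M / (2 * M + 2))).
  { replace (eps * (2 * M / (2 * M + 2))) with (2 * (eps / (2 * M + 2)) * M) by (field; lra).
    apply Rmult_le_compat_r; lra. }
  assert (2 * M / (2 * M + 2) < 1).
  { apply (Rmult_lt_reg_r (2 * M + 2)); [lra |]. field_simplify; lra. }
  nra.
Qed.

(** * C^1 functions and integrals against a weight *)

Definition C1 (S : R -> R) : Prop :=
  (forall x, ex_derive S x) /\ (forall x, continuous (Derive S) x).

Lemma C1_continuous S x : C1 S -> continuous S x.
Proof. intros [H _]. apply (ex_derive_continuous (K := R_AbsRing) (V := R_NormedModule)), H. Qed.

Lemma continuous_mult_R (f g : R -> R) x :
  continuous f x -> continuous g x -> continuous (fun y => f y * g y) x.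
Proof. apply (continuous_mult f g). Qed.

Lemma continuous_div_R (f g : R -> R) x :
  continuous f x -> continuous g x -> g x <> 0 -> continuous (fun y => f y / g y) x.
Proof. intros Hf Hg Hx. apply continuous_mult_R; [exact Hf | apply continuous_Rinv_comp; assumption]. Qed.

Ltac continuous_tac :=
  match goal with
  | |- forall x, continuous _ x => let x := fresh "x" in intro x; continuous_tac
  | |- continuous (fun _ => ?c) ?x => apply (continuous_const c x)
  | |- continuous (fun y => y) ?x => apply (continuous_id x)
  | |- continuous (fun y => @?f y + @?g y) ?x => apply (continuous_plus f g x); continuous_tac
  | |- continuous (fun y => @?f y - @?g y) ?x => apply (continuous_minus f g x); continuous_tac
  | |- continuous (fun y => @?f y * @?g y) ?x => apply (continuous_mult_R f g x); continuous_tac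
  | |- continuous (fun y => - @?f y) ?x => apply (continuous_opp f x); continuous_tac
  | |- continuous (fun y => @?f y / @?g y) ?x =>
      apply (continuous_div_R f g x); [continuous_tac | continuous_tac | idtac]
  | H : C1 ?S |- continuous (fun y => Derive ?S y) ?x => apply (proj2 H x)
  | H : C1 ?S |- continuous (Derive ?S) ?x => apply (proj2 H x)
  | H : C1 ?S |- continuous (fun y => ?S y) ?x => apply (C1_continuous S x H)
  | H : C1 ?S |- continuous ?S ?x => apply (C1_continuous S x H)
  | H : forall k, C1 (?P k) |- continuous (fun y => ?P ?k y) ?x => apply (C1_continuous _ x (H k))
  | H : forall k, C1 (?P k) |- continuous (?P ?k) ?x => apply (C1_continuous _ x (H k))
  | H : forall k, C1 (?P k) |- continuous (fun y => Derive (?P ?k) y) ?x => apply (proj2 (H k) x)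
  | H : forall k, C1 (?P k) |- continuous (Derive (?P ?k)) ?x => apply (proj2 (H k) x)
  | H : forall x, continuous ?f x |- continuous ?f ?x => apply (H x)
  | H : forall x, continuous ?f x |- continuous (fun y => ?f y) ?x => apply (H x)
  | _ => idtac
  end.

Lemma C1_ext f g : (forall x, f x = g x) -> C1 f -> C1 g.
Proof.
  intros E [H1 H2]. split.
  - intro x. apply ex_derive_ext with f; [exact E | apply H1].
  - intro x. apply continuous_ext with (Derive f); [intro y; apply Derive_ext, E | apply H2].
Qed.

Lemma C1_const c : C1 (fun _ => c).
Proof.
  split; [intro; apply ex_derive_const |].
  intro x. apply continuous_ext with (fun _ => 0); [intro; rewrite Derive_const; reflexivity | continuous_tac].
Qed.

Lemma C1_id : C1 (fun x => x).
Proof.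
  split; [intro; apply ex_derive_id |].
  intro x. apply continuous_ext with (fun _ => 1); [intro y; rewrite Derive_id; reflexivity | continuous_tac].
Qed.

Lemma C1_plus f g : C1 f -> C1 g -> C1 (fun x => f x + g x).
Proof.
  intros Hf Hg. split; [intro; apply (ex_derive_plus f g); [apply Hf | apply Hg] |].
  intro x. apply continuous_ext with (fun y => Derive f y + Derive g y); [| continuous_tac].
  intro y. rewrite (Derive_plus f g) by (apply Hf || apply Hg). reflexivity.
Qed.

Lemma C1_mult f g : C1 f -> C1 g -> C1 (fun x => f x * g x).
Proof.
  intros Hf Hg. split; [intro; apply ex_derive_mult; [apply Hf | apply Hg] |].
  intro x. apply continuous_ext with (fun y => Derive f y * g y + f y * Derive g y); [| continuous_tac].
  intro y. rewrite Derive_mult by (apply Hf || apply Hg). reflexivity.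
Qed.

Lemma C1_scal c f : C1 f -> C1 (fun x => c * f x).
Proof. intro Hf. apply (C1_mult (fun _ => c) f (C1_const c) Hf). Qed.

Lemma C1_minus f g : C1 f -> C1 g -> C1 (fun x => f x - g x).
Proof.
  intros Hf Hg. apply C1_ext with (fun x => f x + (-1) * g x); [intro; ring |].
  apply C1_plus, C1_scal; assumption.
Qed.

Lemma C1_affine c : C1 (fun x => x - c).
Proof. apply C1_minus; [apply C1_id | apply C1_const]. Qed.

Lemma Derive_lin f g c x : C1 f -> C1 g ->
  Derive (fun y => f y + c * g y) x = Derive f x + c * Derive g x.
Proof.
  intros Hf Hg. rewrite (Derive_plus f (fun y => c * g y)) by
    (apply Hf || apply ex_derive_scal, Hg).
  rewrite Derive_scal. reflexivity.
Qed.

Lemma Derive_mult_C1 f g x : C1 f -> C1 g -> Derive (fun y => f y * g y) x = Derive f x * g x + f x * Derive g x.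
Proof. intros Hf Hg. apply Derive_mult; [apply Hf | apply Hg]. Qed.

Lemma Derive_affine c x : Derive (fun y => y - c) x = 1.
Proof. apply is_derive_unique. auto_derive; [exact I | ring]. Qed.

Lemma is_derive_eq (f : R -> R) x l l' : is_derive f x l -> l = l' -> is_derive f x l'.
Proof. intros H <-. exact H. Qed.

Definition wint (w f : R -> R) : R := RInt (fun x => f x * w x) 0 1.

Section WeightedIntegral.

Variable w : R -> R.
Hypothesis w_cont : forall x, continuous w x.

Lemma wint_ext f g : (forall x, f x = g x) -> wint w f = wint w g.
Proof. intro E. apply RInt_ext. intros x _. rewrite E. reflexivity. Qed.

Lemma ex_RInt_wint f : (forall x, continuous f x) -> ex_RInt (fun x => f x * w x) 0 1.
Proof. intro Hf. apply (ex_RInt_continuous (V := R_CompleteNormedModule)). intros; continuous_tac. Qed.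

Lemma wint_lin f g c : (forall x, continuous f x) -> (forall x, continuous g x) ->
  wint w (fun x => f x + c * g x) = wint w f + c * wint w g.
Proof.
  intros Hf Hg. unfold wint.
  rewrite (RInt_ext _ (fun x => plus (f x * w x) (scal c (g x * w x)))).
  2: { intros; unfold plus, scal; simpl; unfold mult; simpl. ring. }
  rewrite (RInt_plus (V := R_CompleteNormedModule)), (RInt_scal (V := R_CompleteNormedModule)).
  - reflexivity.
  - apply ex_RInt_wint, Hg.
  - apply ex_RInt_wint, Hf.
  - apply (ex_RInt_scal (V := R_NormedModule)), ex_RInt_wint, Hg.
Qed.

Lemma wint_zero : wint w (fun _ => 0) = 0.
Proof.
  unfold wint. rewrite (RInt_ext _ (fun _ => 0)) by (intros; apply Rmult_0_l).
  rewrite RInt_const. apply Rmult_0_r.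
Qed.

Lemma wint_scal f c : (forall x, continuous f x) -> wint w (fun x => c * f x) = c * wint w f.
Proof.
  intro Hf. rewrite (wint_ext _ (fun x => 0 + c * f x)) by (intro; ring).
  rewrite wint_lin, wint_zero by continuous_tac. ring.
Qed.

Lemma is_int01_wint f : (forall x, continuous f x) -> is_int01 (fun x => f x * w x) (wint w f).
Proof. intro Hf. apply is_int01_continuous. intros; continuous_tac. Qed.

End WeightedIntegral.

Lemma C1_functional_lin (K : R -> R) (X : (R -> R) -> R) :
  (forall S, C1 S -> is_int01 (fun x => S x * K x) (X S)) ->
  forall f g c, C1 f -> C1 g -> X (fun x => f x + c * g x) = X f + c * X g.
Proof.
  intros HX f g c Hf Hg.
  apply (is_int01_unique (fun x => (f x + c * g x) * K x)).
  - apply HX, C1_plus; [exact Hf | apply C1_scal, Hg].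
  - apply is_int01_ext with (fun x => f x * K x + c * (g x * K x)); [intros; ring |].
    apply is_int01_plus; [apply HX, Hf | apply is_int01_scal, HX, Hg].
Qed.

(** * Monic orthogonal polynomials and their resolvents *)

Lemma nat_ind2 (Q : nat -> Prop) :
  Q 0%nat -> Q 1%nat -> (forall k, Q k -> Q (S k) -> Q (S (S k))) -> forall k, Q k.
Proof.
  intros H0 H1 HS k. enough (Q k /\ Q (S k)) by tauto.
  induction k as [| k [IH1 IH2]]; split; auto.
Qed.

Definition bcoef (b : nat -> R) (k : nat) : R := match k with O => 0 | _ => b k end.

Definition hnorm (w : R -> R) (P : nat -> R -> R) (k : nat) : R :=
  wint w (fun x => P k x * P k x).

(* [Phi] behaves like [f |-> int_0^1 f w / (x - z)]. *)
Definition is_resolvent (w : R -> R) (Phi : (R -> R) -> R) (z : R) : Prop :=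
  (forall f g c, C1 f -> C1 g -> Phi (fun x => f x + c * g x) = Phi f + c * Phi g) /\
  (forall f, C1 f -> Phi (fun x => (x - z) * f x) = wint w f).

Section OrthogonalPolynomials.

Variable w : R -> R.
Variable P : nat -> R -> R.
Variables a b : nat -> R.
Hypothesis w_cont : forall x, continuous w x.
Hypothesis P_C1 : forall k, C1 (P k).
Hypothesis P_orth : forall j k, j <> k -> wint w (fun x => P j x * P k x) = 0.
Hypothesis P_rec : recurrence P a b.
Hypothesis P_0 : forall x, P 0%nat x = 1.

Lemma P_mulx k x : x * P k x = P (S k) x + a k * P k x + bcoef b k * P (pred k) x.
Proof.
  destruct P_rec as [R0 R1]. destruct k.
  - simpl. rewrite R0. ring.
  - rewrite R1 by lia. reflexivity.
Qed.

Lemma P_succ k x : P (S k) x = (x - a k) * P k x - bcoef b k * P (pred k) x.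
Proof. pose proof (P_mulx k x). lra. Qed.

(* [f] is orthogonal to every [P j] with [j >= m]: the form of "deg f < m"
   that the recurrence propagates. *)
Definition orth_from (m : nat) (f : R -> R) : Prop :=
  (forall x, continuous f x) /\ forall j, (m <= j)%nat -> wint w (fun x => P j x * f x) = 0.

Lemma orth_from_P k : orth_from (S k) (P k).
Proof. split; [continuous_tac | intros j Hj; apply P_orth; lia]. Qed.

Lemma orth_from_mono m m' f : (m <= m')%nat -> orth_from m f -> orth_from m' f.
Proof. intros Hm [Hc Ho]. split; [exact Hc | intros j Hj; apply Ho; lia]. Qed.

Lemma orth_from_ext m f g : (forall x, f x = g x) -> orth_from m f -> orth_from m g.
Proof.
  intros E [Hc Ho]. split.
  - intro x. apply continuous_ext with f; [exact E | apply Hc].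
  - intros j Hj. rewrite <- (Ho j Hj). apply wint_ext. intro x. rewrite E. reflexivity.
Qed.

Lemma orth_from_lin m f g c : orth_from m f -> orth_from m g -> orth_from m (fun x => f x + c * g x).
Proof.
  intros [Cf Hf] [Cg Hg]. split; [continuous_tac |].
  intros j Hj. rewrite (wint_ext _ _ (fun x => P j x * f x + c * (P j x * g x))) by (intro; ring).
  rewrite wint_lin, Hf, Hg by (assumption || continuous_tac). ring.
Qed.

Ltac orth_lin :=
  lazymatch goal with
  | |- orth_from _ (fun x => _ + _) => apply orth_from_lin; [orth_lin | idtac]
  | |- _ => idtac
  end.

Lemma orth_from_zero m : orth_from m (fun _ => 0).
Proof.
  split; [continuous_tac |]. intros j _.
  rewrite (wint_ext _ _ (fun _ => 0)) by (intro; ring). apply wint_zero.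
Qed.

Lemma orth_from_scal m f c : orth_from m f -> orth_from m (fun x => c * f x).
Proof.
  intro Hf. apply orth_from_ext with (fun x => 0 + c * f x); [intro; ring |].
  apply orth_from_lin; [apply orth_from_zero | exact Hf].
Qed.

Lemma orth_from_mulx m f : orth_from m f -> orth_from (S m) (fun x => x * f x).
Proof.
  intros [Cf Hf]. split; [continuous_tac |]. intros j Hj.
  rewrite (wint_ext _ _ (fun x => P (S j) x * f x + a j * (P j x * f x) + bcoef b j * (P (pred j) x * f x))).
  2: { intro x. replace (P j x * (x * f x)) with (x * P j x * f x) by ring. rewrite P_mulx. ring. }
  rewrite !wint_lin, !Hf by (lia || continuous_tac). ring.
Qed.

Lemma Derive_P0 x : Derive (P 0%nat) x = 0.
Proof. rewrite (Derive_ext _ (fun _ => 1)) by exact P_0. apply Derive_const. Qed.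

Lemma Derive_P_succ k x :
  Derive (P (S k)) x = P k x + (x - a k) * Derive (P k) x - bcoef b k * Derive (P (pred k)) x.
Proof.
  rewrite (Derive_ext _ (fun y => (y - a k) * P k y + (- bcoef b k) * P (pred k) y))
    by (intro y; rewrite P_succ; ring).
  rewrite (Derive_lin (fun y => (y - a k) * P k y) (P (pred k)));
    [| apply C1_mult; [apply C1_affine | apply P_C1] | apply P_C1].
  rewrite (Derive_mult_C1 (fun y => y - a k) (P k)); [| apply C1_affine | apply P_C1].
  rewrite Derive_affine. ring.
Qed.

Lemma Derive_P1 x : Derive (P 1%nat) x = 1.
Proof. rewrite Derive_P_succ, !Derive_P0, P_0. simpl. ring. Qed.

Lemma orth_from_Derive_P k : orth_from k (Derive (P k)).
Proof.
  induction k as [| | k IH1 IH2] using nat_ind2.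
  - apply orth_from_ext with (fun _ => 0); [intro; symmetry; apply Derive_P0 | apply orth_from_zero].
  - apply orth_from_ext with (P 0%nat); [intro x; rewrite Derive_P1; apply P_0 | apply orth_from_P].
  - apply orth_from_ext with (fun x => P (S k) x + 1 * (x * Derive (P (S k)) x)
                                      + (- a (S k)) * Derive (P (S k)) x + (- b (S k)) * Derive (P k) x).
    { intro x. rewrite (Derive_P_succ (S k) x). simpl. ring. }
    orth_lin.
    + apply orth_from_P.
    + apply orth_from_mulx, IH2.
    + apply orth_from_mono with (S k); [lia | exact IH2].
    + apply orth_from_mono with k; [lia | exact IH1].
Qed.

Definition xderiv_defect (k : nat) (x : R) : R := x * Derive (P k) x - INR k * P k x.

Lemma orth_from_xderiv_defect k : orth_from k (xderiv_defect k).
Proof.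
  induction k as [| | k IH1 IH2] using nat_ind2.
  - apply orth_from_ext with (fun _ => 0); [| apply orth_from_zero].
    intro x. unfold xderiv_defect. rewrite Derive_P0. simpl. ring.
  - apply orth_from_ext with (fun x => a 0%nat * P 0%nat x).
    + intro x. unfold xderiv_defect. rewrite Derive_P1, P_succ, !P_0. simpl. ring.
    + apply orth_from_scal, orth_from_P.
  - apply orth_from_ext with (fun x => a (S k) * P (S k) x + 1 * (x * xderiv_defect (S k) x)
        + (- a (S k)) * xderiv_defect (S k) x + (- b (S k)) * xderiv_defect k x
        + (2 * b (S k)) * P k x).
    { intro x. unfold xderiv_defect. rewrite (Derive_P_succ (S k) x), (P_succ (S k) x). simpl pred.
      rewrite !S_INR. simpl bcoef. ring. }
    orth_lin.
    + apply orth_from_scal, orth_from_P.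
    + apply orth_from_mulx, IH2.
    + apply orth_from_mono with (S k); [lia | exact IH2].
    + apply orth_from_mono with k; [lia | exact IH1].
    + apply orth_from_mono with (S k); [lia | apply orth_from_P].
Qed.

Definition deriv_defect (k : nat) (x : R) : R := Derive (P k) x - INR k * P (pred k) x.

Lemma orth_from_deriv_defect k : orth_from (pred k) (deriv_defect k).
Proof.
  induction k as [| k IH].
  - apply orth_from_ext with (fun _ => 0); [| apply orth_from_zero].
    intro x. unfold deriv_defect. rewrite Derive_P0. simpl. ring.
  - destruct k as [| k].
    { apply orth_from_ext with (fun _ => 0); [| apply orth_from_zero].
      intro x. unfold deriv_defect. rewrite Derive_P1, P_0. simpl. ring. }
    apply orth_from_ext with (fun x => x * deriv_defect (S k) x + (- a (S k)) * deriv_defect (S k) x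
        + (INR (S k) * (a k - a (S k))) * P k x + (INR (S k) * bcoef b k) * P (pred k) x
        + (- b (S k)) * Derive (P k) x).
    { intro x. unfold deriv_defect. rewrite (Derive_P_succ (S k) x), (S_INR (S k)). simpl pred.
      rewrite (P_succ k x). simpl bcoef. ring. }
    simpl pred in IH |- *.
    orth_lin.
    + apply orth_from_mulx, IH.
    + apply orth_from_mono with k; [lia | exact IH].
    + apply orth_from_P.
    + apply orth_from_mono with (S (pred k)); [lia | apply orth_from_P].
    + apply orth_from_mono with k; [lia | apply orth_from_Derive_P].
Qed.

Local Notation h := (hnorm w P).

Lemma wint_P k : (1 <= k)%nat -> wint w (P k) = 0.
Proof.
  intro Hk. rewrite (wint_ext _ _ (fun x => P k x * P 0%nat x)) by (intro; rewrite P_0; ring).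
  apply P_orth. lia.
Qed.

Lemma wint_x_P_P j k :
  wint w (fun x => x * P j x * P k x)
  = wint w (fun x => P j x * P (S k) x) + a k * wint w (fun x => P j x * P k x)
    + bcoef b k * wint w (fun x => P j x * P (pred k) x).
Proof.
  rewrite (wint_ext _ _ (fun x => P j x * P (S k) x + a k * (P j x * P k x) + bcoef b k * (P j x * P (pred k) x))).
  - rewrite !wint_lin by continuous_tac. reflexivity.
  - intro x. replace (x * P j x * P k x) with (P j x * (x * P k x)) by ring. rewrite P_mulx. ring.
Qed.

Lemma hnorm_succ k : b (S k) * h k = h (S k).
Proof.
  pose proof (wint_x_P_P (S k) k) as E1. pose proof (wint_x_P_P k (S k)) as E2.
  rewrite (P_orth (S k) k), (P_orth (S k) (pred k)) in E1 by lia.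
  rewrite (P_orth k (S (S k))), (P_orth k (S k)) in E2 by lia.
  rewrite (wint_ext _ (fun x => x * P k x * P (S k) x) (fun x => x * P (S k) x * P k x)) in E2 by (intro; ring).
  unfold hnorm. simpl in E2. lra.
Qed.

Lemma wint_x_sq k : wint w (fun x => x * P k x * P k x) = a k * h k.
Proof.
  rewrite wint_x_P_P, (P_orth k (S k)) by lia. unfold hnorm.
  destruct k as [| k]; simpl; [ring |]. rewrite (P_orth (S k) k) by lia. ring.
Qed.

Lemma orth_from_apply m f j : orth_from m f -> (m <= j)%nat -> wint w (fun x => P j x * f x) = 0.
Proof. intros [_ H] Hj. apply H, Hj. Qed.

Lemma wint_P_dP k : wint w (fun x => P k x * Derive (P k) x) = 0.
Proof. apply orth_from_apply with k; [apply orth_from_Derive_P | lia]. Qed.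

Lemma wint_P_xdP k : wint w (fun x => P k x * (x * Derive (P k) x)) = INR k * h k.
Proof.
  rewrite (wint_ext _ _ (fun x => P k x * xderiv_defect k x + INR k * (P k x * P k x)))
    by (intro; unfold xderiv_defect; ring).
  rewrite wint_lin by (unfold xderiv_defect; continuous_tac).
  rewrite (orth_from_apply k) by (apply orth_from_xderiv_defect || lia). unfold hnorm. ring.
Qed.

Lemma wint_dP_Ppred n : wint w (fun x => Derive (P n) x * P (pred n) x) = INR n * h (pred n).
Proof.
  rewrite (wint_ext _ _ (fun x => P (pred n) x * deriv_defect n x + INR n * (P (pred n) x * P (pred n) x)))
    by (intro; unfold deriv_defect; ring).
  rewrite wint_lin by (unfold deriv_defect; continuous_tac).
  rewrite (orth_from_apply (pred n)) by (apply orth_from_deriv_defect || lia). unfold hnorm. ring.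
Qed.

Lemma wint_P_dPpred n : wint w (fun x => P n x * Derive (P (pred n)) x) = 0.
Proof. apply orth_from_apply with (pred n); [apply orth_from_Derive_P | lia]. Qed.

Lemma wint_P_xdPpred n : (1 <= n)%nat -> wint w (fun x => P n x * (x * Derive (P (pred n)) x)) = 0.
Proof.
  intro Hn. apply orth_from_apply with (S (pred n)); [apply orth_from_mulx, orth_from_Derive_P | lia].
Qed.

Lemma wint_xx_P_dP n : (1 <= n)%nat ->
  wint w (fun x => x * x * P n x * Derive (P n) x)
  = INR n * a n * h n + b n * wint w (fun x => x * Derive (P n) x * P (pred n) x).
Proof.
  intro Hn.
  rewrite (wint_ext _ _ (fun x => P (S n) x * xderiv_defect n x + INR n * (P (S n) x * P n x)
      + a n * (P n x * xderiv_defect n x) + (a n * INR n) * (P n x * P n x)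
      + bcoef b n * (x * Derive (P n) x * P (pred n) x))).
  2: { intro x. replace (x * x * P n x * Derive (P n) x) with ((x * P n x) * (x * Derive (P n) x)) by ring.
       rewrite P_mulx. unfold xderiv_defect. ring. }
  rewrite !wint_lin by (unfold xderiv_defect; continuous_tac).
  rewrite (orth_from_apply n (xderiv_defect n) (S n)), (orth_from_apply n (xderiv_defect n) n)
    by (apply orth_from_xderiv_defect || lia).
  rewrite P_orth by lia. unfold hnorm.
  replace (bcoef b n) with (b n) by (destruct n; [lia | reflexivity]). ring.
Qed.

Section Resolvent.

Variable Phi : (R -> R) -> R.
Variable z : R.
Hypothesis HPhi : is_resolvent w Phi z.

Let Phi_ext f g : (forall x, f x = g x) -> Phi f = Phi g.
Proof. intro E. f_equal. extensionality x. apply E. Qed.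

Lemma resolvent_mul_P_succ g j : C1 g ->
  Phi (fun x => g x * P (S j) x)
  = wint w (fun x => g x * P j x) + (z - a j) * Phi (fun x => g x * P j x)
    - bcoef b j * Phi (fun x => g x * P (pred j) x).
Proof.
  intro Hg. destruct HPhi as [Phi_lin Phi_shift].
  assert (HgP : forall k, C1 (fun x => g x * P k x)) by (intro; apply C1_mult; auto).
  rewrite (Phi_ext _ (fun x => ((x - z) * (g x * P j x) + (z - a j) * (g x * P j x))
                               + (- bcoef b j) * (g x * P (pred j) x))) by (intro; rewrite P_succ; ring).
  assert (Hshift : C1 (fun x => (x - z) * (g x * P j x))) by (apply C1_mult; [apply C1_affine | apply HgP]).
  rewrite Phi_lin; [| apply C1_plus; [exact Hshift | apply C1_scal, HgP] | apply HgP].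
  rewrite Phi_lin; [| exact Hshift | apply HgP].
  rewrite Phi_shift by apply HgP. ring.
Qed.

Lemma resolvent_P_succ j :
  Phi (P (S j)) = wint w (P j) + (z - a j) * Phi (P j) - bcoef b j * Phi (P (pred j)).
Proof.
  assert (E : forall f, Phi f = Phi (fun x => P 0%nat x * f x))
    by (intro; apply Phi_ext; intro; rewrite P_0; ring).
  rewrite !(E (P _)), (wint_ext _ (P j) (fun x => P 0%nat x * P j x)) by (intro; rewrite P_0; ring).
  apply resolvent_mul_P_succ, P_C1.
Qed.

Lemma resolvent_P_prod n k : (k <= n)%nat -> Phi (fun x => P n x * P k x) = P k z * Phi (P n).
Proof.
  assert (Hstep : forall j, (S j <= n)%nat ->
            Phi (fun x => P n x * P j x) = P j z * Phi (P n) ->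
            Phi (fun x => P n x * P (pred j) x) = P (pred j) z * Phi (P n) ->
            Phi (fun x => P n x * P (S j) x) = P (S j) z * Phi (P n)).
  { intros j Hj IH1 IH2. rewrite resolvent_mul_P_succ, P_orth, IH1, IH2, (P_succ j z) by (apply P_C1 || lia).
    ring. }
  induction k as [| | k IH1 IH2] using nat_ind2; intro Hk.
  - rewrite P_0. rewrite (Phi_ext _ (P n)) by (intro; rewrite P_0; ring). ring.
  - apply (Hstep 0%nat Hk); rewrite P_0; rewrite (Phi_ext _ (P n)) by (intro; rewrite P_0; ring); ring.
  - apply Hstep; [exact Hk | apply IH2; lia | apply IH1; lia].
Qed.

Lemma christoffel_darboux k : P k z * Phi (P (S k)) - P (S k) z * Phi (P k) = h k.
Proof.
  induction k as [| k IH].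
  - rewrite resolvent_P_succ, (P_succ 0 z), !P_0. simpl bcoef. unfold hnorm.
    rewrite (wint_ext _ (fun x => P 0%nat x * P 0%nat x) (P 0%nat)) by (intro; rewrite P_0; ring). ring.
  - rewrite (resolvent_P_succ (S k)), (P_succ (S k) z), wint_P by lia. simpl pred; simpl bcoef.
    rewrite <- hnorm_succ, <- IH. ring.
Qed.

(* By [resolvent_P_prod] this is the Christoffel-Darboux identity at [pred n]
   multiplied by [P (pred n) z * Phi (P n)]. *)
Lemma resolvent_key n : (1 <= n)%nat ->
  Phi (fun x => P n x * P (pred n) x) ^ 2 - h (pred n) * Phi (fun x => P n x * P (pred n) x)
  = Phi (fun x => P n x * P n x) * Phi (fun x => P (pred n) x * P (pred n) x).
Proof.
  intro Hn.
  rewrite !resolvent_P_prod by lia.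
  pose proof (christoffel_darboux (pred n)) as CD. replace (S (pred n)) with n in CD by lia.
  rewrite <- CD. ring.
Qed.

End Resolvent.

End OrthogonalPolynomials.

(** * The weight and its singular integrals *)

Section JacobiTypeWeight.

Variables al be ga A B t : R.
Hypothesis Hal : 0 < al.
Hypothesis Hbe : 0 < be.
Hypothesis Hga : 0 < ga.
Hypothesis Ht : 0 < t < 1.

Local Notation w := (wgt al be ga A B t).

Definition cusp (x : R) : R := (A + B) * rpw (x - t) ga + A * rpw (t - x) ga.

(* This is [(x - t) * cusp x], written through powers [ga + 1 > 1] to make it differentiable. *)
Definition cusp_lift (x : R) : R := (A + B) * rpw (x - t) (ga + 1) - A * rpw (t - x) (ga + 1).

Lemma wgt_cusp x : w x = rpw x al * rpw (1 - x) be * cusp x.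
Proof.
  unfold wgt, cusp, heav. destruct (Rlt_dec 0 (x - t)).
  - rewrite Rabs_pos_eq, (rpw_npos (t - x)) by lra. ring.
  - destruct (Req_dec x t) as [-> | Hne].
    + rewrite Rminus_eq_0, Rabs_R0, !(rpw_npos 0) by lra. ring.
    + rewrite Rabs_left, (rpw_npos (x - t)) by lra.
      replace (- (x - t)) with (t - x) by ring. ring.
Qed.

Lemma cusp_lift_eq x : cusp_lift x = (x - t) * cusp x.
Proof.
  unfold cusp_lift, cusp. rewrite !rpw_succ.
  destruct (Rlt_le_dec 0 (x - t)).
  - rewrite (rpw_npos (t - x)) by lra. ring.
  - rewrite (rpw_npos (x - t)) by lra. ring.
Qed.

Lemma is_derive_cusp_lift x : is_derive cusp_lift x ((ga + 1) * cusp x).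
Proof.
  assert (Hpow : forall s, is_derive (fun u => rpw u (ga + 1)) s ((ga + 1) * rpw s ga)).
  { intro s. replace ga with (ga + 1 - 1) at 2 by ring. apply is_derive_rpw. lra. }
  assert (D1 : is_derive (fun y => rpw (y - t) (ga + 1)) x (1 * ((ga + 1) * rpw (x - t) ga))).
  { apply (is_derive_comp (fun u => rpw u (ga + 1)) (fun y => y - t)); [apply Hpow |].
    auto_derive; [exact I | ring]. }
  assert (D2 : is_derive (fun y => rpw (t - y) (ga + 1)) x ((-1) * ((ga + 1) * rpw (t - x) ga))).
  { apply (is_derive_comp (fun u => rpw u (ga + 1)) (fun y => t - y)); [apply Hpow |].
    auto_derive; [exact I | ring]. }
  unfold cusp_lift, cusp.
  eapply is_derive_ext; [intro; reflexivity |].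
  replace ((ga + 1) * ((A + B) * rpw (x - t) ga + A * rpw (t - x) ga))
    with ((A + B) * (1 * ((ga + 1) * rpw (x - t) ga)) - A * ((-1) * ((ga + 1) * rpw (t - x) ga))) by ring.
  apply (is_derive_minus (fun y => (A + B) * rpw (y - t) (ga + 1)) (fun y => A * rpw (t - y) (ga + 1)));
    apply is_derive_scal; assumption.
Qed.

Lemma continuous_cusp x : continuous cusp x.
Proof.
  unfold cusp.
  apply (continuous_plus (fun y => (A + B) * rpw (y - t) ga) (fun y => A * rpw (t - y) ga));
    apply continuous_mult_R; try apply continuous_const.
  - apply (continuous_comp (fun y => y - t) (fun u => rpw u ga)); [continuous_tac | apply continuous_rpw, Hga].
  - apply (continuous_comp (fun y => t - y) (fun u => rpw u ga)); [continuous_tac | apply continuous_rpw, Hga].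
Qed.

Lemma continuous_wgt x : continuous w x.
Proof.
  apply continuous_ext with (fun y => rpw y al * rpw (1 - y) be * cusp y); [intro; symmetry; apply wgt_cusp |].
  apply continuous_mult_R; [apply continuous_mult_R | apply continuous_cusp].
  - apply continuous_rpw, Hal.
  - apply (continuous_comp (fun y => 1 - y) (fun u => rpw u be)); [continuous_tac | apply continuous_rpw, Hbe].
Qed.

Definition ibp_boundary (S g : R -> R) (y : R) : R :=
  S y * g y * rpw y al * rpw (1 - y) be * cusp_lift y.

Lemma is_derive_ibp_boundary S g x : C1 S -> C1 g -> 0 < x < 1 ->
  is_derive (ibp_boundary S g) x
    (w x * ((Derive S x * g x + S x * Derive g x) * (x - t)
            + S x * g x * ((al / x - be / (1 - x)) * (x - t) + (ga + 1)))).
Proof.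
  intros HS Hg Hx.
  assert (D1 : is_derive (fun y => rpw (1 - y) be) x ((-1) * (be * Rpower (1 - x) (be - 1)))).
  { apply (is_derive_comp (fun u => rpw u be) (fun y => 1 - y)); [apply is_derive_rpw_pos; lra |].
    auto_derive; [exact I | ring]. }
  unfold ibp_boundary. eapply is_derive_eq.
  - apply (is_derive_mult (fun y => S y * g y * rpw y al * rpw (1 - y) be) cusp_lift);
      [| apply is_derive_cusp_lift | intros; apply Rmult_comm].
    apply (is_derive_mult (fun y => S y * g y * rpw y al) (fun y => rpw (1 - y) be));
      [| exact D1 | intros; apply Rmult_comm].
    apply (is_derive_mult (fun y => S y * g y) (fun y => rpw y al));
      [| apply is_derive_rpw_pos; lra | intros; apply Rmult_comm].
    apply (is_derive_mult S g); [apply Derive_correct, HS | apply Derive_correct, Hg | intros; apply Rmult_comm].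
  - unfold plus, mult; simpl. match goal with |- ?a = ?b => change (@eq R a b) end.
    rewrite wgt_cusp, cusp_lift_eq, !rpw_pos, !Rpower_pred by lra. field. lra.
Qed.

Lemma is_int01_ibp S g : C1 S -> C1 g ->
  is_int01 (fun x => w x * ((Derive S x * g x + S x * Derive g x) * (x - t)
                            + S x * g x * ((al / x - be / (1 - x)) * (x - t) + (ga + 1)))) 0.
Proof.
  intros HS Hg.
  assert (Hw : forall x, continuous w x) by exact continuous_wgt.
  assert (Hpow : forall x, continuous (fun y => rpw y al) x) by (intro; apply continuous_rpw, Hal).
  assert (Hpow1 : forall x, continuous (fun y => rpw (1 - y) be) x).
  { intro x. apply (continuous_comp (fun y => 1 - y) (fun u => rpw u be));
      [continuous_tac | apply continuous_rpw, Hbe]. }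
  assert (Hlift : forall x, continuous cusp_lift x).
  { intro x. apply (ex_derive_continuous (K := R_AbsRing) (V := R_NormedModule)).
    eexists. apply is_derive_cusp_lift. }
  apply (is_int01_derive_0 (ibp_boundary S g)).
  - intros x Hx. apply is_derive_ibp_boundary; assumption.
  - intros x Hx. continuous_tac; simpl; lra.
  - unfold ibp_boundary. continuous_tac.
  - unfold ibp_boundary. continuous_tac.
  - unfold ibp_boundary. rewrite (rpw_npos 0) by lra. ring.
  - unfold ibp_boundary. rewrite Rminus_eq_0, (rpw_npos 0) by lra. ring.
Qed.

(* The values of [int S w / x] and [int S w / (1 - x)] obtained from [is_int01_ibp]
   with [g = 1 - x] and [g = x] respectively. *)
Definition wint_divx (S : R -> R) : R :=
  wint w (fun x => Derive S x * ((1 - x) * (x - t))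
                   + S x * (al * (1 + t - x) - (1 + be) * (x - t) + (ga + 1) * (1 - x))) / (al * t).

Definition wint_div1mx (S : R -> R) : R :=
  wint w (fun x => Derive S x * (x * (x - t))
                   + S x * ((2 + al + be + ga) * x - t - al * t + be * (1 - t))) / (be * (1 - t)).

Lemma is_int01_divx S : C1 S -> is_int01 (fun x => S x * w x / x) (wint_divx S).
Proof.
  intro HS. assert (Hw : forall x, continuous w x) by exact continuous_wgt.
  assert (Hg : C1 (fun x => 1 - x)) by (apply C1_minus; [apply C1_const | apply C1_id]).
  assert (Dg : forall x, Derive (fun y => 1 - y) x = -1).
  { intro x. apply is_derive_unique. auto_derive; [exact I | ring]. }
  pose proof (is_int01_ibp S _ HS Hg) as Ibp.
  unfold wint_divx. match goal with |- is_int01 _ (wint w ?reg / ?c) =>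
    replace (wint w reg / c) with (/ c * (wint w reg + -1 * 0)) by (field; lra) end.
  eapply is_int01_ext; [| apply is_int01_scal, is_int01_plus;
                          [apply is_int01_wint; [exact Hw | continuous_tac] | apply is_int01_scal, Ibp]].
  intros x Hx. cbv beta. rewrite Dg. field. lra.
Qed.

Lemma is_int01_div1mx S : C1 S -> is_int01 (fun x => S x * w x / (1 - x)) (wint_div1mx S).
Proof.
  intro HS. assert (Hw : forall x, continuous w x) by exact continuous_wgt.
  pose proof (is_int01_ibp S _ HS C1_id) as Ibp.
  unfold wint_div1mx. match goal with |- is_int01 _ (wint w ?reg / ?c) =>
    replace (wint w reg / c) with (/ c * (wint w reg + -1 * 0)) by (field; lra) end.
  eapply is_int01_ext; [| apply is_int01_scal, is_int01_plus;
                          [apply is_int01_wint; [exact Hw | continuous_tac] | apply is_int01_scal, Ibp]].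
  intros x Hx. cbv beta. rewrite Derive_id. field. lra.
Qed.

Lemma wint_divx_lin f g c : C1 f -> C1 g ->
  wint_divx (fun x => f x + c * g x) = wint_divx f + c * wint_divx g.
Proof.
  apply (C1_functional_lin (fun x => w x / x)). intros S HS.
  eapply is_int01_ext; [| apply is_int01_divx, HS]. intros. cbv beta. field. lra.
Qed.

Lemma wint_div1mx_lin f g c : C1 f -> C1 g ->
  wint_div1mx (fun x => f x + c * g x) = wint_div1mx f + c * wint_div1mx g.
Proof.
  apply (C1_functional_lin (fun x => w x / (1 - x))). intros S HS.
  eapply is_int01_ext; [| apply is_int01_div1mx, HS]. intros. cbv beta. field. lra.
Qed.

Lemma wint_divx_mulx_affine f z : C1 f ->
  wint_divx (fun x => (x - z) * f x) = wint w f - z * wint_divx f.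
Proof.
  intro Hf. apply (is_int01_unique (fun x => (x - z) * f x * w x / x)).
  - apply is_int01_divx, C1_mult; [apply C1_affine | exact Hf].
  - replace (wint w f - z * wint_divx f) with (wint w f + (- z) * wint_divx f) by ring.
    pose proof (is_int01_wint w continuous_wgt f (fun x => C1_continuous f x Hf)) as If.
    eapply is_int01_ext; [| apply is_int01_plus; [exact If | apply is_int01_scal, is_int01_divx, Hf]].
    intros x Hx. cbv beta. field. lra.
Qed.

Lemma wint_div1mx_mulx_affine f z : C1 f ->
  wint_div1mx (fun x => (x - z) * f x) = (1 - z) * wint_div1mx f - wint w f.
Proof.
  intro Hf. apply (is_int01_unique (fun x => (x - z) * f x * w x / (1 - x))).
  - apply is_int01_div1mx, C1_mult; [apply C1_affine | exact Hf].
  - replace ((1 - z) * wint_div1mx f - wint w f) with ((1 - z) * wint_div1mx f + (-1) * wint w f) by ring.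
    pose proof (is_int01_wint w continuous_wgt f (fun x => C1_continuous f x Hf)) as If.
    eapply is_int01_ext;
      [| apply is_int01_plus; [apply is_int01_scal, is_int01_div1mx, Hf | apply is_int01_scal, If]].
    intros x Hx. cbv beta. field. lra.
Qed.

Lemma wint_divx_div1mx S : C1 S ->
  al * t * wint_divx S + be * (1 - t) * wint_div1mx S
  = wint w (fun x => Derive S x * (x - t)) + (al + be + ga + 1) * wint w S.
Proof.
  intro HS. assert (Hw : forall x, continuous w x) by exact continuous_wgt.
  pose proof (is_int01_ibp S (fun _ => 1) HS (C1_const 1)) as Ibp.
  apply (is_int01_unique (fun x => al * t * (S x * w x / x) + be * (1 - t) * (S x * w x / (1 - x)))).
  - apply is_int01_plus; apply is_int01_scal; [apply is_int01_divx | apply is_int01_div1mx]; exact HS.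
  - rewrite <- wint_lin by continuous_tac.
    match goal with |- is_int01 _ ?v => replace v with (v + -1 * 0) by ring end.
    eapply is_int01_ext;
      [| apply is_int01_plus; [apply is_int01_wint; [exact Hw |] | apply (is_int01_scal (-1)), Ibp]].
    + intros x Hx. cbv beta. rewrite Derive_const. field. lra.
    + continuous_tac.
Qed.

Lemma resolvent_divx : is_resolvent w wint_divx 0.
Proof.
  split; [intros; apply wint_divx_lin; assumption |].
  intros f Hf. rewrite wint_divx_mulx_affine by exact Hf. ring.
Qed.

Lemma resolvent_div1mx : is_resolvent w (fun S => - wint_div1mx S) 1.
Proof.
  split; [intros; rewrite wint_div1mx_lin by assumption; ring |].
  intros f Hf. rewrite wint_div1mx_mulx_affine by exact Hf. ring.
Qed.

(* Formally [f |-> int_0^1 f w / (x - t)]; its shift property is [wint_divx_div1mx]. *)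
Definition resolvent_t (S : R -> R) : R :=
  (- al * wint_divx S + be * wint_div1mx S - wint w (Derive S)) / ga.

Lemma resolvent_at_t : is_resolvent w resolvent_t t.
Proof.
  assert (Hw : forall x, continuous w x) by exact continuous_wgt.
  split.
  - intros f g c Hf Hg. unfold resolvent_t. rewrite wint_divx_lin, wint_div1mx_lin by assumption.
    replace (Derive (fun x => f x + c * g x)) with (fun x => Derive f x + c * Derive g x)
      by (extensionality x; symmetry; apply Derive_lin; assumption).
    rewrite wint_lin by continuous_tac. field. lra.
  - intros f Hf. unfold resolvent_t.
    rewrite wint_divx_mulx_affine, wint_div1mx_mulx_affine by exact Hf.
    replace (Derive (fun x => (x - t) * f x)) with (fun x => f x + 1 * (Derive f x * (x - t))).
    2: { extensionality x. rewrite (Derive_mult_C1 (fun y => y - t) f x); [| apply C1_affine | exact Hf].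
         rewrite Derive_affine. ring. }
    rewrite wint_lin by continuous_tac.
    pose proof (wint_divx_div1mx f Hf) as E.
    replace (wint w (fun x => Derive f x * (x - t)))
      with (al * t * wint_divx f + be * (1 - t) * wint_div1mx f - (al + be + ga + 1) * wint w f) by lra.
    field. lra.
Qed.

End JacobiTypeWeight.

(** * Positivity of the norms *)

Lemma C1_pow k : C1 (fun x => x ^ k).
Proof.
  induction k as [| k IH]; [apply (C1_ext (fun _ => 1)); [intro; reflexivity | apply C1_const] |].
  apply C1_ext with (fun x => x * x ^ k); [intro; reflexivity | apply C1_mult; [apply C1_id | exact IH]].
Qed.

Lemma C1_lowpoly c k : C1 (lowpoly c k).
Proof.
  induction k as [| k IH]; [apply (C1_ext (fun _ => 0)); [intro; reflexivity | apply C1_const] |].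
  apply C1_ext with (fun x => lowpoly c k x + c k * x ^ k); [intro; reflexivity |].
  apply C1_plus; [exact IH | apply C1_scal, C1_pow].
Qed.

Lemma C1_monic k p : monic_deg k p -> C1 p.
Proof.
  intros [c Hc]. apply C1_ext with (fun x => x ^ k + lowpoly c k x); [intro; symmetry; apply Hc |].
  apply C1_plus; [apply C1_pow | apply C1_lowpoly].
Qed.

Lemma is_derive_pow_succ k x : is_derive (fun y => y ^ S k) x (INR (S k) * x ^ k).
Proof. auto_derive; [exact I | simpl; ring]. Qed.

Lemma is_derive_lowpoly c k x :
  is_derive (lowpoly c (S k)) x (lowpoly (fun j => INR (S j) * c (S j)) k x).
Proof.
  induction k as [| k IH].
  - simpl lowpoly at 2.
    apply is_derive_ext with (fun _ => c 0%nat); [intro; simpl; ring | apply (is_derive_const (c 0%nat))].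
  - apply is_derive_ext with (fun y => lowpoly c (S k) y + c (S k) * y ^ S k); [intro; reflexivity |].
    eapply is_derive_eq;
      [apply (is_derive_plus (lowpoly c (S k))); [exact IH | apply is_derive_scal, is_derive_pow_succ] |].
    unfold plus; simpl. ring.
Qed.

Lemma lowpoly_scal r c k x : lowpoly (fun j => r * c j) k x = r * lowpoly c k x.
Proof. induction k as [| k IH]; simpl; [ring | rewrite IH; ring]. Qed.

(* The derivative of a monic polynomial of degree k+1 is k+1 times a monic one of degree k. *)
Lemma monic_not_zero_on k c u v : u < v -> ~ (forall x, u < x < v -> x ^ k + lowpoly c k x = 0).
Proof.
  revert c. induction k as [| k IH]; intros c Huv Hz.
  - specialize (Hz ((u + v) / 2)). simpl in Hz. lra.
  - apply (IH (fun j => / INR (S k) * (INR (S j) * c (S j))) Huv). intros x Hx.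
    assert (D1 : is_derive (fun y => y ^ S k + lowpoly c (S k) y) x
                   (INR (S k) * x ^ k + lowpoly (fun j => INR (S j) * c (S j)) k x)).
    { apply (is_derive_plus (fun y => y ^ S k) (lowpoly c (S k)));
        [apply is_derive_pow_succ | apply is_derive_lowpoly]. }
    assert (D2 : is_derive (fun y => y ^ S k + lowpoly c (S k) y) x 0).
    { apply is_derive_ext_loc with (fun _ => 0); [| apply (is_derive_const 0)].
      apply locally_interval with u v; simpl; try lra. intros y Hu Hv. symmetry. apply Hz. lra. }
    pose proof (is_derive_unique _ _ _ D1) as U. rewrite (is_derive_unique _ _ _ D2) in U.
    assert (0 < INR (S k)) by (apply lt_0_INR; lia).
    rewrite lowpoly_scal. apply (Rmult_eq_reg_l (INR (S k))); [| lra].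
    rewrite Rmult_0_r, U. field. lra.
Qed.

Lemma monic_exists_nonzero k p u v : monic_deg k p -> u < v -> exists x, u < x < v /\ p x <> 0.
Proof.
  intros [c Hc] Huv. apply NNPP. intro Hno.
  apply (monic_not_zero_on k c u v Huv). intros x Hx. rewrite <- Hc.
  apply NNPP. intro Hx0. apply Hno. exists x. split; assumption.
Qed.

Lemma RInt_pos_of_pos_at (g : R -> R) x0 : (forall x, continuous g x) -> (forall x, 0 <= g x) ->
  0 < x0 < 1 -> 0 < g x0 -> 0 < RInt g 0 1.
Proof.
  intros Cg Pg Hx0 Hg.
  destruct (continuous_near g x0 (g x0 / 2) (Cg x0)) as [d [Hd Kd]]; [lra |].
  set (e := Rmin (d / 2) (Rmin (x0 / 2) ((1 - x0) / 2))).
  assert (He : 0 < e) by (unfold e; repeat apply Rmin_pos; lra).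
  assert (He1 : e <= d / 2) by apply Rmin_l.
  assert (He2 : e <= x0 / 2) by (unfold e; eapply Rle_trans; [apply Rmin_r | apply Rmin_l]).
  assert (He3 : e <= (1 - x0) / 2) by (unfold e; eapply Rle_trans; [apply Rmin_r | apply Rmin_r]).
  assert (EX : forall u v, ex_RInt g u v)
    by (intros; apply (ex_RInt_continuous (V := R_CompleteNormedModule) g); intros; apply Cg).
  rewrite <- (RInt_Chasles g 0 (x0 - e) 1), <- (RInt_Chasles g (x0 - e) (x0 + e) 1) by apply EX.
  unfold plus; simpl.
  assert (0 <= RInt g 0 (x0 - e)) by (apply RInt_ge_0; [lra | apply EX | intros; apply Pg]).
  assert (0 <= RInt g (x0 + e) 1) by (apply RInt_ge_0; [lra | apply EX | intros; apply Pg]).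
  assert (0 < RInt g (x0 - e) (x0 + e)).
  { apply RInt_gt_0; [lra | | intros; apply Cg].
    intros x Hx. assert (Hnear : Rabs (g x - g x0) < g x0 / 2) by (apply Kd; apply Rabs_def1; lra).
    apply Rabs_def2 in Hnear. lra. }
  lra.
Qed.

Section Positivity.

Variables al be ga A B t : R.
Hypothesis Hal : 0 < al.
Hypothesis Hbe : 0 < be.
Hypothesis Hga : 0 < ga.
Hypothesis Ht : 0 < t < 1.
Hypothesis HA : 0 <= A.
Hypothesis HAB : 0 <= A + B.
Hypothesis Hnz : ~ (A = 0 /\ A + B = 0).

Local Notation w := (wgt al be ga A B t).

Lemma wgt_ge0 x : 0 <= w x.
Proof.
  rewrite wgt_cusp. unfold cusp.
  pose proof (rpw_ge0 x al). pose proof (rpw_ge0 (1 - x) be).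
  pose proof (rpw_ge0 (x - t) ga). pose proof (rpw_ge0 (t - x) ga).
  apply Rmult_le_pos; [apply Rmult_le_pos; assumption |].
  apply Rplus_le_le_0_compat; apply Rmult_le_pos; assumption.
Qed.

Lemma wgt_pos_on_interval : exists u v, 0 <= u < v /\ v <= 1 /\ forall x, u < x < v -> 0 < w x.
Proof.
  destruct (Rlt_le_dec 0 A) as [HApos | HA0].
  - exists 0, t. split; [lra | split; [lra |]]. intros x Hx.
    rewrite wgt_cusp. unfold cusp. rewrite (rpw_npos (x - t)), Rmult_0_r, Rplus_0_l by lra.
    repeat apply Rmult_lt_0_compat; try apply rpw_gt0; lra.
  - assert (HB : 0 < A + B) by (destruct (Req_dec (A + B) 0); [exfalso; apply Hnz; split; lra | lra]).
    exists t, 1. split; [lra | split; [lra |]]. intros x Hx.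
    rewrite wgt_cusp. unfold cusp. rewrite (rpw_npos (t - x)), Rmult_0_r, Rplus_0_r by lra.
    repeat apply Rmult_lt_0_compat; try apply rpw_gt0; lra.
Qed.

Lemma hnorm_pos (P : nat -> R -> R) k : monic_deg k (P k) -> 0 < hnorm w P k.
Proof.
  intro Hm. pose proof (C1_monic k (P k) Hm) as HC.
  destruct wgt_pos_on_interval as [u [v [Huv [Hv Hw]]]].
  destruct (monic_exists_nonzero k (P k) u v Hm (proj2 Huv)) as [x0 [Hx0 Hnz0]].
  assert (Hwc : forall x, continuous w x) by (intro; apply continuous_wgt; assumption).
  apply (RInt_pos_of_pos_at _ x0).
  - continuous_tac.
  - intro x. apply Rmult_le_pos; [apply Rle_0_sqr | apply wgt_ge0].
  - lra.
  - apply Rmult_lt_0_compat; [apply Rsqr_pos_lt, Hnz0 | apply Hw; lra].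
Qed.

End Positivity.

(** * The recurrence coefficients *)

Section RecurrenceCoefficients.

Variables al be ga A B t : R.
Hypothesis Hal : 0 < al.
Hypothesis Hbe : 0 < be.
Hypothesis Hga : 0 < ga.
Hypothesis Ht : 0 < t < 1.

Local Notation w := (wgt al be ga A B t).
Local Notation X0 := (wint_divx al be ga A B t).
Local Notation X1 := (wint_div1mx al be ga A B t).

Variable P : nat -> R -> R.
Variables a b : nat -> R.

Local Notation h := (hnorm w P).
Hypothesis P_C1 : forall k, C1 (P k).
Hypothesis P_orth : forall j k, j <> k -> wint w (fun x => P j x * P k x) = 0.
Hypothesis P_rec : recurrence P a b.
Hypothesis P_0 : forall x, P 0%nat x = 1.

Hypothesis h_pos : forall k, 0 < h k.

Let w_cont x : continuous w x.
Proof. apply continuous_wgt; assumption. Qed.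

Lemma divx_div1mx_sq k :
  al * t * X0 (fun x => P k x * P k x) + be * (1 - t) * X1 (fun x => P k x * P k x)
  = (2 * INR k + al + be + ga + 1) * h k.
Proof.
  rewrite wint_divx_div1mx by (assumption || apply C1_mult; apply P_C1).
  replace (fun x => Derive (fun y => P k y * P k y) x * (x - t))
    with (fun x => 2 * (P k x * (x * Derive (P k) x)) + (- 2 * t) * (P k x * Derive (P k) x)).
  2: { extensionality x. rewrite (Derive_mult_C1 (P k) (P k)); [ring | apply P_C1 | apply P_C1]. }
  rewrite wint_lin, wint_scal by (exact w_cont || continuous_tac).
  rewrite (wint_P_xdP w P a b), (wint_P_dP w P a b) by assumption.
  unfold hnorm. ring.
Qed.

Lemma wint_Derive_sq k : wint w (Derive (fun x => P k x * P k x)) = 0.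
Proof.
  replace (Derive (fun x => P k x * P k x)) with (fun x => 2 * (P k x * Derive (P k) x)).
  2: { extensionality x. rewrite (Derive_mult_C1 (P k) (P k)); [ring | apply P_C1 | apply P_C1]. }
  rewrite wint_scal, (wint_P_dP w P a b) by (assumption || continuous_tac). ring.
Qed.

Lemma wint_Derive_cross n : wint w (Derive (fun x => P n x * P (pred n) x)) = INR n * h (pred n).
Proof.
  replace (Derive (fun x => P n x * P (pred n) x))
    with (fun x => Derive (P n) x * P (pred n) x + 1 * (P n x * Derive (P (pred n)) x)).
  2: { extensionality x. rewrite (Derive_mult_C1 (P n) (P (pred n))); [ring | apply P_C1 | apply P_C1]. }
  rewrite wint_lin by (exact w_cont || continuous_tac).
  rewrite (wint_dP_Ppred w P a b), (wint_P_dPpred w P a b) by assumption. ring.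
Qed.

Lemma divx_div1mx_cross n : (1 <= n)%nat ->
  al * t * X0 (fun x => P n x * P (pred n) x) + be * (1 - t) * X1 (fun x => P n x * P (pred n) x)
  = wint w (fun x => x * Derive (P n) x * P (pred n) x) - t * INR n * h (pred n).
Proof.
  intro Hn. rewrite wint_divx_div1mx by (assumption || apply C1_mult; apply P_C1).
  rewrite P_orth by lia.
  replace (fun x => Derive (fun y => P n y * P (pred n) y) x * (x - t))
    with (fun x => x * Derive (P n) x * P (pred n) x + (- t) * (Derive (P n) x * P (pred n) x)
                   + 1 * (P n x * (x * Derive (P (pred n)) x)) + (- t) * (P n x * Derive (P (pred n)) x)).
  2: { extensionality x. rewrite (Derive_mult_C1 (P n) (P (pred n))); [ring | apply P_C1 | apply P_C1]. }
  rewrite !wint_lin by (exact w_cont || continuous_tac).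
  rewrite (wint_dP_Ppred w P a b), (wint_P_dPpred w P a b), (wint_P_xdPpred w P a b) by assumption.
  ring.
Qed.

Lemma divx_div1mx_xsq n : (1 <= n)%nat ->
  al * t * h n + be * (1 - t) * (X1 (fun x => P n x * P n x) - h n)
  = a n * h n - t * h n + 2 * (INR n * a n * h n + b n * wint w (fun x => x * Derive (P n) x * P (pred n) x))
    - 2 * t * (INR n * h n) + (al + be + ga + 1) * (a n * h n).
Proof.
  intro Hn.
  assert (HS : C1 (fun x => P n x * P n x)) by (apply C1_mult; apply P_C1).
  pose proof (wint_divx_div1mx al be ga A B t Hal Hbe Hga Ht (fun x => (x - 0) * (P n x * P n x))) as E.
  rewrite wint_divx_mulx_affine, wint_div1mx_mulx_affine in E by assumption.
  specialize (E (C1_mult _ _ (C1_affine 0) HS)).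
  replace (al * t * h n + be * (1 - t) * (X1 (fun x => P n x * P n x) - h n))
    with (wint w (fun x => Derive (fun y => (y - 0) * (P n y * P n y)) x * (x - t))
          + (al + be + ga + 1) * wint w (fun x => (x - 0) * (P n x * P n x)))
    by (unfold hnorm; rewrite <- E; ring).
  clear E.
  replace (fun x => Derive (fun y => (y - 0) * (P n y * P n y)) x * (x - t))
    with (fun x => x * P n x * P n x + (- t) * (P n x * P n x) + 2 * (x * x * P n x * Derive (P n) x)
                   + (- 2 * t) * (P n x * (x * Derive (P n) x))).
  2: { extensionality x.
       rewrite (Derive_mult_C1 (fun y => y - 0) (fun y => P n y * P n y)); [| apply C1_affine | exact HS].
       rewrite (Derive_mult_C1 (P n) (P n)); [| apply P_C1 | apply P_C1]. rewrite Derive_affine. ring. }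
  rewrite !wint_lin by (exact w_cont || continuous_tac).
  rewrite (wint_ext _ (fun x => (x - 0) * (P n x * P n x)) (fun x => x * P n x * P n x)) by (intro; ring).
  rewrite (wint_x_sq w P a b), (wint_xx_P_dP w P a b), (wint_P_xdP w P a b) by assumption.
  unfold hnorm. ring.
Qed.

Lemma b_ratio n : (1 <= n)%nat -> b n = h n / h (pred n).
Proof.
  intro Hn. pose proof (hnorm_succ w P a b w_cont P_C1 P_orth P_rec (pred n)) as E.
  replace (S (pred n)) with n in E by lia. rewrite <- E. field. apply Rgt_not_eq, h_pos.
Qed.

Theorem recurrence_a n : (1 <= n)%nat ->
  let S1 := fun x => P n x * P (pred n) x in
  let S2 := fun x => P n x * P n x in
  (al + be + ga + 2 * INR n + 2) * a n
  = 2 * (t - 1) * (be / h (pred n) * X1 S1) - 2 * t * (al / h (pred n) * X0 S1)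
    - (t - 1) * (be / h n * X1 S2) + t * al + (t - 1) * be + t.
Proof.
  intros Hn S1 S2.
  pose proof (divx_div1mx_cross n Hn) as I1. pose proof (divx_div1mx_xsq n Hn) as I2.
  fold S1 S2 in I1, I2. pose proof (h_pos n). pose proof (h_pos (pred n)).
  set (K := wint w (fun x => x * Derive (P n) x * P (pred n) x)) in I1, I2.
  apply (Rmult_eq_reg_r (h n)); [| lra].
  replace ((al + be + ga + 2 * INR n + 2) * a n * h n)
    with (al * t * h n + be * (1 - t) * (X1 S2 - h n) + t * h n - 2 * (b n * K) + 2 * t * (INR n * h n))
    by (rewrite I2; ring).
  replace K with (al * t * X0 S1 + be * (1 - t) * X1 S1 + t * INR n * h (pred n)) by lra.
  rewrite b_ratio by exact Hn. field. lra.
Qed.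

(* [resolvent_key] at z = 0, 1, t gives three quadratic relations; combined with the
   product of [divx_div1mx_sq] at [n] and [pred n] they determine [b n = h n / h (pred n)]. *)
Theorem recurrence_b n : (1 <= n)%nat ->
  let yn := al / h (pred n) * X0 (fun x => P n x * P (pred n) x) in
  let rn := be / h (pred n) * X1 (fun x => P n x * P (pred n) x) in
  (al + be + ga + 2 * INR n + 1) * (al + be + ga + 2 * INR n - 1) * b n
  = (t * yn - (t - 1) * rn) ^ 2 - (t - 1) * (2 * INR n * t + ga * t + be) * rn
    + t * ((t - 1) * (2 * INR n + ga) - al) * yn + INR n * (INR n + ga) * (t ^ 2 - t).
Proof.
  intros Hn yn rn.
  pose proof (resolvent_key w P a b w_cont P_C1 P_orth P_rec P_0 _ _
                (resolvent_divx al be ga A B t Hal Hbe Hga Ht) n Hn) as K0.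
  pose proof (resolvent_key w P a b w_cont P_C1 P_orth P_rec P_0 _ _
                (resolvent_div1mx al be ga A B t Hal Hbe Hga Ht) n Hn) as K1.
  pose proof (resolvent_key w P a b w_cont P_C1 P_orth P_rec P_0 _ _
                (resolvent_at_t al be ga A B t Hal Hbe Hga Ht) n Hn) as Kt.
  cbv beta in K1. unfold resolvent_t in Kt. rewrite wint_Derive_cross, !wint_Derive_sq in Kt.
  pose proof (divx_div1mx_sq n) as En. pose proof (divx_div1mx_sq (pred n)) as Em.
  replace (INR (pred n)) with (INR n - 1) in Em by (destruct n; [lia | rewrite S_INR; simpl; ring]).
  unfold yn, rn. rewrite b_ratio by exact Hn.
  pose proof (h_pos n). pose proof (h_pos (pred n)).
  set (hn := h n) in *. set (hm := h (pred n)) in *.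
  set (x0 := X0 (fun x => P n x * P (pred n) x)) in *. set (x1 := X1 (fun x => P n x * P (pred n) x)) in *.
  set (u2 := X0 (fun x => P n x * P n x)) in *. set (v2 := X1 (fun x => P n x * P n x)) in *.
  set (u3 := X0 (fun x => P (pred n) x * P (pred n) x)) in *.
  set (v3 := X1 (fun x => P (pred n) x * P (pred n) x)) in *.
  assert (Hprod : (al + be + ga + 2 * INR n + 1) * (al + be + ga + 2 * INR n - 1) * hn * hm
     = t * al ^ 2 * (u2 * u3) + (1 - t) * be ^ 2 * (v2 * v3)
       - t * (1 - t) * ((be * v2 - al * u2) * (be * v3 - al * u3))).
  { transitivity ((2 * INR n + al + be + ga + 1) * hn * ((2 * (INR n - 1) + al + be + ga + 1) * hm)); [ring |].
    rewrite <- En, <- Em. ring. }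
  assert (Hmix : (be * v2 - al * u2) * (be * v3 - al * u3)
                 = (- al * x0 + be * x1 - INR n * hm) ^ 2 - ga * hm * (- al * x0 + be * x1 - INR n * hm)).
  { apply (Rmult_eq_reg_r (/ ga ^ 2)); [| apply Rinv_neq_0_compat, pow_nonzero; lra].
    replace ((be * v2 - al * u2) * (be * v3 - al * u3) * / ga ^ 2)
      with ((- al * u2 + be * v2 - 0) / ga * ((- al * u3 + be * v3 - 0) / ga)) by (field; lra).
    rewrite <- Kt. field. lra. }
  rewrite <- K0 in Hprod. replace (v2 * v3) with ((- v2) * (- v3)) in Hprod by ring.
  rewrite <- K1, Hmix in Hprod.
  apply (Rmult_eq_reg_r (hn * hm)); [| apply Rmult_integral_contrapositive; split; lra].
  transitivity ((al + be + ga + 2 * INR n + 1) * (al + be + ga + 2 * INR n - 1) * hn * hm * (hn / hm));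
    [field; lra |].
  rewrite Hprod. field. lra.
Qed.

End RecurrenceCoefficients.

Lemma int01_is_int01_eq f l l' : int01 f l -> is_int01 f l' -> l = l'.
Proof. intro H. apply is_int01_unique, is_int01_int01, H. Qed.

Lemma monic_OPS_wint w P h : (forall x, continuous w x) -> monic_OPS w P h ->
  (forall k, C1 (P k)) /\ (forall x, P 0%nat x = 1)
  /\ (forall j k, j <> k -> wint w (fun x => P j x * P k x) = 0) /\ (forall k, h k = hnorm w P k).
Proof.
  intros Hw [Hmon [Horth Hnorm]].
  assert (HC : forall k, C1 (P k)) by (intro k; exact (C1_monic k (P k) (Hmon k))).
  split; [exact HC | split; [| split]].
  - intro x. destruct (Hmon 0%nat) as [c Hc]. rewrite Hc. simpl. ring.
  - intros j k Hjk. symmetry.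
    apply (int01_is_int01_eq _ _ _ (Horth j k Hjk)), is_int01_wint; [exact Hw | continuous_tac].
  - intro k. apply (int01_is_int01_eq _ _ _ (Hnorm k)), is_int01_wint; [exact Hw | continuous_tac].
Qed.

Theorem proposition3p1
  (al be ga A B t : R)
  (Hal : 0 < al) (Hbe : 0 < be) (Hga : 0 < ga)
  (HA : 0 <= A) (HAB : 0 <= A + B) (Hnz : ~ (A = 0 /\ A + B = 0))
  (Ht : 0 < t < 1)
  (P : nat -> R -> R) (h an bn : nat -> R)
  (HP : monic_OPS (wgt al be ga A B t) P h)
  (Hrec : recurrence P an bn)
  (n : nat) (Hn : (1 <= n)%nat)
  (IR Iy Ir : R)
  (HIR : int01 (fun y => P n y * P n y * wgt al be ga A B t y / (1 - y)) IR)
  (HIy : int01 (fun y => P n y * P (pred n) y * wgt al be ga A B t y / y) Iy)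
  (HIr : int01 (fun y => P n y * P (pred n) y * wgt al be ga A B t y / (1 - y)) Ir) :
  let Rn := be / h n * IR in
  let yn := al / h (pred n) * Iy in
  let rn := be / h (pred n) * Ir in
  let N := INR n in
  (al + be + ga + 2 * N + 2) * an n
    = 2 * (t - 1) * rn - 2 * t * yn - (t - 1) * Rn + t * al + (t - 1) * be + t
  /\
  (al + be + ga + 2 * N + 1) * (al + be + ga + 2 * N - 1) * bn n
    = (t * yn - (t - 1) * rn) ^ 2
      - (t - 1) * (2 * N * t + ga * t + be) * rn
      + t * ((t - 1) * (2 * N + ga) - al) * yn
      + N * (N + ga) * (t ^ 2 - t).
Proof.
  intros Rn yn rn N.
  assert (Hw : forall x, continuous (wgt al be ga A B t) x) by (intro; apply continuous_wgt; assumption).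
  destruct (monic_OPS_wint _ _ _ Hw HP) as [HC [H0 [Horth Hh]]].
  assert (Hpos : forall k, 0 < hnorm (wgt al be ga A B t) P k)
    by (intro k; apply hnorm_pos; try assumption; apply (proj1 HP)).
  assert (H1 : C1 (fun x => P n x * P (pred n) x)) by (apply C1_mult; apply HC).
  assert (H2 : C1 (fun x => P n x * P n x)) by (apply C1_mult; apply HC).
  unfold Rn, yn, rn, N. rewrite !Hh.
  rewrite (int01_is_int01_eq _ _ _ HIy (is_int01_divx al be ga A B t Hal Hbe Hga Ht _ H1)).
  rewrite (int01_is_int01_eq _ _ _ HIr (is_int01_div1mx al be ga A B t Hal Hbe Hga Ht _ H1)).
  rewrite (int01_is_int01_eq _ _ _ HIR (is_int01_div1mx al be ga A B t Hal Hbe Hga Ht _ H2)).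
  split.
  - exact (recurrence_a al be ga A B t Hal Hbe Hga Ht P an bn HC Horth Hrec H0 Hpos n Hn).
  - exact (recurrence_b al be ga A B t Hal Hbe Hga Ht P an bn HC Horth Hrec H0 Hpos n Hn).
Qed.
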